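(* Let $b_1,b_2\in\mathbb V$ with $\mathrm{ord}_p(b_i,b_i)\ge0$, and let $\Lambda_1,\Lambda_2$ be their central lattices. Then \[\langle Z(b_1)^h,Z(b_2)^v\rangle=\begin{cases}m(b_2,\Lambda_1),&\Lambda_1\in\mathcal B(b_2),\\0,&\text{otherwise},\end{cases}\] and for every vertex lattice $\Lambda$, \[\langle\mathbb P_\Lambda,Z(b_2)\rangle=\begin{cases}1,&\Lambda\in\mathcal B(b_2)\text{ and }d(\Lambda,\Lambda_2)\equiv\mathrm{ord}_p(b_2,b_2)\pmod 2,\\-p,&\Lambda\in\mathcal B(b_2)\text{ and }d(\Lambda,\Lambda_2)\not\equiv\mathrm{ord}_p(b_2,b_2)\pmod 2,\\0,&\Lambda\notin\mathcal B(b_2).\end{cases}\]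
   Context: Fix an odd prime $p$ inert in the imaginary quadratic field $k$; $k_p$, $o_{k,p}$ its completion and ring of integers, $a\mapsto a'$ conjugation, $\mathbb F=\overline{\mathbb F}_p$, $W=W(\mathbb F)$. $\mathcal D$ is the regular formal scheme over $\mathrm{Spf}\,W$ (a formal model of the Drinfeld upper half plane) representing, on $W$-schemes $S$ with $p$ locally nilpotent, isomorphism classes of $(X,i_X,\lambda_X,\rho_X)$: $X$ a $p$-divisible group of height 4 and dimension 2, $i_X:o_{k,p}\to\mathrm{End}(X)$ with $\det(T-i_X(a)|_{\mathrm{Lie}X})=(T-a)(T-a')$, $\lambda_X$ a polarization with $p\ker\lambda_X=0$, $|\ker\lambda_X|=p^2$, Rosati involution inducing conjugation on $o_{k,p}$, and $\rho_X:X\times_S\bar S\to\mathbb X\times_{\mathbb F}\bar S$ ($\bar S=S\times_W\mathbb F$) an $o_{k,p}$-linear height 0 quasi-isogeny with $\rho_X^*\lambda_{\mathbb X}=\lambda_X$, for a fixed such triple $(\mathbb X,i_{\mathbb X},\lambda_{\mathbb X})$ over $\mathbb F$. Fix a supersingular $p$-divisible group $\mathbb Y$ of height 2, dimension 1 over $\mathbb F$ with $o_{k,p}$-action and principal polarization $\lambda_{\mathbb Y}$ whose Rosati induces conjugation; its deformation space $\mathcal D_0$ is $\mathrm{Spf}\,W$ (universal lift $Y$), and $\mathcal D_0\times_W\mathcal D$ is identified with $\mathcal D$. $\mathbb V=\mathrm{Hom}_{o_{k,p}}(\mathbb Y,\mathbb X)\otimes\mathbb Q_p$ with hermitian form $(b_1,b_2)=\lambda_{\mathbb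 Y}^{-1}b_2^\vee\lambda_{\mathbb X}b_1\in k_p$; it is a split 2-dimensional hermitian space. For $b\in\mathbb V$, $Z(b)\subset\mathcal D$ is the closed formal subscheme where $\rho_X^{-1}\circ b\circ\rho_Y$ lifts to a homomorphism $Y\to X$. For closed formal subschemes with sum of ideals open, $\langle Z,Z'\rangle=\chi(\mathcal O_Z\otimes^{\mathbb L}\mathcal O_{Z'})$, extended bilinearly to cycles. A vertex lattice is an $o_{k,p}$-lattice $\Lambda\subset\mathbb V$ with $\Lambda^\sharp=\Lambda$ (type 0) or $\Lambda^\sharp=p\Lambda$ (type 2). The Bruhat–Tits tree $\mathscr B$ has vertex lattices as vertices, with an edge between $\Lambda$ of type 0 and $\Lambda'$ of type 2 iff $p\Lambda'\subset\Lambda\subset\Lambda'$; it is a $(p+1)$-regular tree with graph distance $d(\cdot,\cdot)$. $\mathcal D_{red}$ is the union of projective lines $\mathbb P_\Lambda\cong\mathbb P^1_{\mathbb F}$ indexed by vertex lattices. For $b$ with $m=\mathrm{ord}_p(b,b)\ge0$ let $t=\lfloor\frac{m+1}2\rfloor$, $\beta=p^{-t}b$; the central lattice of $b$ is the unique vertex lattice $\Lambda_0$ with $\beta\in\Lambda_0\setminus p\Lambda_0$ (type 0 iff $m$ even). Known structure: $Z(b)=Z(b)^h+Z(b)^v$, $Z(b)^v=\sum_{\Lambda\in\mathcal B(b)}m(b,\Lambda)\mathbb P_\Lambda$, where $Z(b)^h\cong\mathrm{Spf}W$ is horizontal meeting the special fibre in one non-superspecial point of $\mathbb P_{\Lambda_0}$,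 $\mathcal B(b)=\{\Lambda:b\in\Lambda\}=\{\Lambda:d(\Lambda,\Lambda_0)\le m\}$, and $m(b,\Lambda)=t-\lfloor d(\Lambda,\Lambda_0)/2\rfloor$ if $m=2t$, $m(b,\Lambda)=t-\lfloor(d(\Lambda,\Lambda_0)+1)/2\rfloor$ if $m=2t-1$. If $\mathrm{ord}_p(b,b)<0$, $Z(b)=0$ and $\mathcal B(b)=\emptyset$. Known intersection numbers: $\langle Z(b)^h,\mathbb P_\Lambda\rangle=1$ if $\Lambda=\Lambda_0$ and $0$ otherwise; $\langle\mathbb P_\Lambda,\mathbb P_{\Lambda'}\rangle=-(p+1)$ if $\Lambda=\Lambda'$, $1$ if $d(\Lambda,\Lambda')=1$, $0$ otherwise. *)

From HB Require Import structures.
From mathcomp Require Import all_boot all_order all_algebra.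
Set Implicit Arguments. Unset Strict Implicit. Unset Printing Implicit Defensive.
Import Order.TTheory GRing.Theory Num.Theory.
Local Open Scope ring_scope.

(* The Bruhat--Tits tree, abstractly.                                        *)
(* [adj] is the edge relation on the type [V] of vertex lattices, [d] the    *)
(* graph distance, [ty] the type of a vertex lattice (false = type 0,        *)
(* true = type 2).  [bt_tree p adj d ty] says: [d] is the graph distance of  *)
(* the (connected) graph [adj], the graph is a tree, it is (p+1)-regular,    *)
(* and edges join vertices of different types.                              *)
Definition bt_tree (p : nat) (V : eqType) (adj : rel V) (d : V -> V -> nat)
    (ty : V -> bool) : Prop :=
      (forall v w, adj v w = adj w v) /\
      (forall v, ~~ adj v v) /\
      (* d is the graph distance of adj (the graph is connected) *)
      (forall u, d u u = 0%N) /\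
      (forall u w, u != w -> exists v, adj v w /\ (d u v).+1 = d u w) /\
      (forall u v w, adj v w -> (d u w <= (d u v).+1)%N) /\
      (* acyclicity: bipartite, and every vertex w <> u has a unique
         neighbour closer to u (so every edge is a geodesic tree edge) *)
      (forall u v w, adj v w -> d u v != d u w) /\
      (forall u w v v', adj v w -> adj v' w -> (d u v < d u w)%N ->
          (d u v' < d u w)%N -> v = v') /\
      (forall v, exists s : seq V, [/\ uniq s, size s = p.+1 &
                                       forall w, adj v w = (w \in s)]) /\
      (forall v w, adj v w -> ty v != ty w).

(* Multiplicity m(b, Lambda) of P_Lambda in Z(b)^v, as a function of
   m = ord_p (b,b) >= 0 and dist = d(Lambda, Lambda_0):
   t = floor((m+1)/2);  m = 2t   : t - floor(dist/2)
                        m = 2t-1 : t - floor((dist+1)/2).                    *)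
Definition mult (m dist : nat) : int :=
  if ~~ odd m then (m./2)%:Z - (dist./2)%:Z
  else (m.+1./2)%:Z - (dist.+1./2)%:Z.

Definition ipPP (p : nat) (V : eqType) (d : V -> V -> nat) (L L' : V) : int :=
  if L == L' then - (p.+1)%:Z else if d L L' == 1%N then 1 else 0.

From HB Require Import structures.
From mathcomp Require Import all_boot all_order all_algebra.
From mathcomp Require Import zify ring.
Set Implicit Arguments. Unset Strict Implicit. Unset Printing Implicit Defensive.
Import Order.TTheory GRing.Theory Num.Theory.
Local Open Scope ring_scope.

(* Intersecting P_L with Z(b) = Z(b)^h + sum_L' m(b, L') P_L' only involves L and
   its p + 1 neighbours in the Bruhat-Tits tree.  If L is at distance k > 0 from
   the central lattice, exactly one neighbour is at distance k - 1 and the other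
   p are at distance k + 1, so the pairing is
   -(p+1) m(k) + m(k-1) + p m(k+1) = (m(k-1) - m(k)) - p (m(k) - m(k+1)),
   where m is the multiplicity extended by 0 beyond distance ord(b,b).  Along a
   geodesic m drops by one every second step, at the steps of the parity fixed by
   ord(b,b), which leaves 1 or -p.  At the centre all p + 1 neighbours are at
   distance 1 and the horizontal component contributes the extra 1. *)

Lemma big_mem_swap (R : Type) (idx : R) (op : Monoid.com_law idx)
    (T : eqType) (r s : seq T) (F : T -> R) : uniq r -> uniq s ->
  \big[op/idx]_(x <- r | x \in s) F x = \big[op/idx]_(x <- s | x \in r) F x.
Proof.
move=> r_uniq s_uniq; rewrite -[LHS]big_filter -[RHS]big_filter; apply: perm_big.
by apply: uniq_perm; rewrite ?filter_uniq // => x; rewrite !mem_filter andbC.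
Qed.

Lemma sum_pred1_uniq (R : nmodType) (T : eqType) (r : seq T) (j : T) (F : T -> R) :
  uniq r -> \sum_(x <- r | x == j) F x = F j *+ (j \in r).
Proof.
move=> r_uniq; rewrite (eq_bigr (fun=> F j)) => [|x /eqP -> //].
by rewrite big_const_seq iter_addr_0 (count_uniq_mem _ r_uniq).
Qed.

Lemma sum_ipPP (p : nat) (V : eqType) (d : V -> V -> nat) (L : V)
    (s B : seq V) (g : V -> int) :
  uniq s -> uniq B -> L \notin s -> (forall w, (d L w == 1%N) = (w \in s)) ->
  (forall w, w \notin B -> g w = 0) ->
  \sum_(w <- B) ipPP p d L w * g w = - (p.+1)%:Z * g L + \sum_(w <- s) g w.
Proof.
move=> s_uniq B_uniq Ls ds g0.
have ipPPE w : ipPP p d L w * g w =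
    (if w == L then - (p.+1)%:Z * g w else 0) + (if w \in s then g w else 0).
  rewrite /ipPP eq_sym ds; case: eqVneq => [->|_]; first by rewrite (negbTE Ls) addr0.
  by rewrite add0r; case: (w \in s); rewrite ?mul1r ?mul0r.
rewrite (eq_bigr _ (fun w _ => ipPPE w)) big_split -!big_mkcond /=.
rewrite sum_pred1_uniq // big_mem_swap // big_mkcond.
congr (_ + _); last by apply: eq_bigr => w _; case: ifPn => // /g0.
by case: (boolP (L \in B)) => [|/g0 ->]; rewrite ?mulr0.
Qed.

Section Pairing.
Variables (C : zmodType) (ip : C -> C -> int).
Hypothesis ipD : forall x y z, ip x (y + z) = ip x y + ip x z.

Lemma ip_zmod_morphism x : zmod_morphism (ip x).
Proof. by move=> y z; apply/eqP; rewrite eq_sym subr_eq -ipD subrK.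
Qed.

Lemma ip_sum_mulz (T : Type) x (s : seq T) (F : T -> C) (n : T -> int) :
  ip x (\sum_(i <- s) F i *~ n i) = \sum_(i <- s) ip x (F i) * n i.
Proof.
pose ipx : {additive C -> int} :=
  HB.pack (ip x) (GRing.isZmodMorphism.Build _ _ _ (ip_zmod_morphism x)).
rewrite -[ip x]/(ipx : _ -> _) raddf_sum.
by apply: eq_bigr => i _; rewrite raddfMz mulrzz.
Qed.
End Pairing.

Definition multB (m dist : nat) : int := if (dist <= m)%N then mult m dist else 0.

Lemma multB_diffS m k :
  multB m k - multB m k.+1 = ((k <= m)%N && (odd k != odd m))%:R.
Proof.
rewrite /multB /mult; case hk: (odd k); case hm: (odd m);
  repeat case: ifP; lia.
Qed.

Lemma multB_diffP m k : (0 < k)%N ->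
  multB m k.-1 - multB m k = ((k <= m)%N && (odd k == odd m))%:R.
Proof.
move=> k_gt0; rewrite /multB /mult; case hk: (odd k); case hm: (odd m);
  repeat case: ifP; lia.
Qed.

Lemma multB_center_balance m p :
  1 + (- (p.+1)%:Z * multB m 0 + multB m 1 *+ p.+1) =
  if odd 0 == odd m then 1 else - p%:Z.
Proof. by rewrite -mulr_natr /multB /mult; repeat case: ifP; nia. Qed.

Lemma multB_balance m p k : (0 < k)%N ->
  - (p.+1)%:Z * multB m k + (multB m k.-1 + multB m k.+1 *+ p) =
  if (k <= m)%N then (if odd k == odd m then 1 else - p%:Z) else 0.
Proof.
move=> k_gt0.
have -> : - (p.+1)%:Z * multB m k + (multB m k.-1 + multB m k.+1 *+ p) =
    (multB m k.-1 - multB m k) - p%:Z * (multB m k - multB m k.+1).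
  by rewrite -mulr_natr -addn1 PoszD; ring.
rewrite multB_diffS multB_diffP //.
by case: (k <= m)%N; case: eqP; rewrite /= ?mulr1 ?mulr0 ?subr0 ?sub0r.
Qed.

Fixpoint walk {V : Type} (adj : rel V) (n : nat) (u w : V) : Prop :=
  if n is n'.+1 then exists2 v, walk adj n' u v & adj v w else u = w.

Section BruhatTitsTree.
Variables (p : nat) (V : eqType) (adj : rel V) (d : V -> V -> nat) (ty : V -> bool).
Hypothesis hT : bt_tree p adj d ty.

Lemma adj_sym v w : adj v w = adj w v.
Proof. by case: hT. Qed.

Lemma dist_eq0 u w : (d u w == 0%N) = (u == w).
Proof.
have [_ [_ [d0 [dex _]]]] := hT.
case: (eqVneq u w) => [->|/dex [v [_ <-]]]; by rewrite ?d0.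
Qed.

Lemma walk_dist u w : walk adj (d u w) u w.
Proof.
have [_ [_ [_ [dex _]]]] := hT.
suff: forall n w, d u w = n -> walk adj n u w by apply.
elim=> [|n IH] {}w dw /=; first by apply/eqP; rewrite -dist_eq0 dw.
have /dex [v [vw dv]] : u != w by rewrite -dist_eq0 dw.
by exists v => //; apply: IH; move: dv; rewrite dw => -[].
Qed.

Lemma dist_walk n u w : walk adj n u w -> (d u w <= n)%N.
Proof.
have [_ [_ [d0 [_ [dle _]]]]] := hT.
elim: n w => [|n IH] w /=; first by move=> ->; rewrite d0.
by case=> v /IH vn /(dle u) /leq_trans; apply.
Qed.

Lemma walkS n x u w : adj x u -> walk adj n u w -> walk adj n.+1 x w.
Proof.
elim: n w => [|n IH] w xu /=; first by move=> <-; exists x.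
by case=> v /(IH _ xu) xv vw; exists v.
Qed.

Lemma walk_rev n u w : walk adj n u w -> walk adj n w u.
Proof.
elim: n w => [|n IH] w /=; first by move=> ->.
by case=> v /IH vu vw; apply: walkS vu; rewrite adj_sym.
Qed.

Lemma distC u w : d u w = d w u.
Proof.
have le_dC x y : (d x y <= d y x)%N by apply/dist_walk/walk_rev/walk_dist.
by apply/eqP; rewrite eqn_leq !le_dC.
Qed.

Lemma dist_eq1 u w : (d u w == 1%N) = adj u w.
Proof.
have [_ [airr [d0 [dex [dle _]]]]] := hT.
apply/idP/idP => [/eqP duw | uw].
  have /dex [v [vw dv]] : u != w by rewrite -dist_eq0 duw.
  by move: dv; rewrite duw => -[/eqP]; rewrite dist_eq0 => /eqP ->.
have : u != w by apply: contraNneq (airr u) => e; rewrite {2}e.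
by rewrite -dist_eq0; move: (dle u u w uw); rewrite d0; case: (d u w) => [|[]].
Qed.

Section Neighbours.
Variables (L : V) (s : seq V).
Hypotheses (s_uniq : uniq s) (s_size : size s = p.+1)
  (s_adj : forall w, adj L w = (w \in s)).

Lemma sum_neighbours_center (f : nat -> int) :
  \sum_(v <- s) f (d v L) = f 1%N *+ p.+1.
Proof.
rewrite (eq_big_seq (fun=> f 1%N)) => [|v]; last first.
  by rewrite -s_adj -dist_eq1 distC => /eqP ->.
by rewrite big_const_seq iter_addr_0 count_predT s_size.
Qed.

Lemma sum_neighbours_off_center u (f : nat -> int) : L != u ->
  \sum_(v <- s) f (d v u) = f (d L u).-1 + f (d L u).+1 *+ p.
Proof.
have [_ [_ [_ [dex [dle [dne [duniq _]]]]]]] := hT.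
rewrite eq_sym => /dex [v [vL dv]].
have vs : v \in s by rewrite -s_adj adj_sym.
have far w : w \in s -> w != v -> d u w = (d u L).+1.
  rewrite -s_adj => Lw wv; apply/eqP; rewrite eqn_leq (dle u L w Lw) /=.
  rewrite ltn_neqAle (dne u L w Lw) /= leqNgt; move: wv; apply: contra => wL.
  by apply/eqP; apply: (duniq u L _ _ _ vL wL); rewrite 1?adj_sym // -dv.
rewrite (perm_big _ (perm_to_rem vs)) big_cons !(distC _ u).
rewrite (eq_big_seq (fun=> f (d u L).+1)) => [|w]; last first.
  by rewrite mem_rem_uniq // => /andP[wv ws]; rewrite distC far.
by rewrite big_const_seq iter_addr_0 count_predT size_rem // s_size -dv.
Qed.
End Neighbours.
End BruhatTitsTree.

Theorem mainTheorem2
  (* p an odd prime *)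
  (p : nat) (hp : prime p) (hpodd : odd p)
  (* the Bruhat--Tits tree of vertex lattices *)
  (V : eqType) (adj : rel V) (d : V -> V -> nat) (ty : V -> bool)
  (hT : bt_tree p adj d ty)
  (* cycles on D (with compact intersection), a Z-module, and the
     bilinear (symmetric) intersection pairing <.,.> = chi(O ⊗^L O) *)
  (C : zmodType) (ip : C -> C -> int)
  (hipD : forall x y z, ip x (y + z) = ip x y + ip x z)
  (hDip : forall x y z, ip (y + z) x = ip y x + ip z x)
  (hsym : forall x y, ip x y = ip y x)
  (* the projective lines P_Lambda of D_red *)
  (P : V -> C)
  (hPP : forall L L', ip (P L) (P L') = ipPP p d L L')
  (* b_1: m1 = ord_p(b1,b1) >= 0, central lattice L1, horizontal part Zh1 *)
  (m1 : nat) (L1 : V) (hty1 : ty L1 = odd m1) (Zh1 : C)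
  (hZh1 : forall L, ip Zh1 (P L) = (L == L1)%:R)
  (* b_2: m2 = ord_p(b2,b2) >= 0, central lattice L2, horizontal part Zh2,
     B(b2) = {L : d(L, L2) <= m2} enumerated by B2 *)
  (m2 : nat) (L2 : V) (hty2 : ty L2 = odd m2) (Zh2 : C)
  (hZh2 : forall L, ip Zh2 (P L) = (L == L2)%:R)
  (B2 : seq V) (hB2u : uniq B2) (hB2 : forall L, (L \in B2) = (d L L2 <= m2)%N) :
  let Zv2 := \sum_(L <- B2) (P L) *~ mult m2 (d L L2) in
  let Z2 := Zh2 + Zv2 in
  ip Zh1 Zv2 = (if L1 \in B2 then mult m2 (d L1 L2) else 0)
  /\ (forall L, ip (P L) Z2 =
        if L \in B2 then
          (if odd (d L L2) == odd m2 then 1 else - (p%:Z))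
        else 0).
Proof.
move=> Zv2 Z2; split.
  rewrite ip_sum_mulz //.
  under eq_bigr do rewrite hZh1 mulr_natl mulrb.
  by rewrite -big_mkcond sum_pred1_uniq // mulrb.
move=> L; have [_ [airr [d0 [_ [_ [_ [_ [/(_ L) [s [s_uniq s_size s_adj]] _]]]]]]]] := hT.
pose g L' := multB m2 (d L' L2).
have Zv2E : Zv2 = \sum_(L' <- B2) P L' *~ g L'.
  by apply: eq_big_seq => L'; rewrite hB2 /g /multB => ->.
rewrite /Z2 hipD hsym hZh2 Zv2E ip_sum_mulz //.
under eq_bigr do rewrite hPP.
rewrite (sum_ipPP p s_uniq hB2u); first last.
- by move=> w; rewrite hB2 /g /multB => /negbTE ->.
- by move=> w; rewrite -s_adj (dist_eq1 hT).
- by rewrite -s_adj.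
rewrite hB2; case: eqVneq => [eLL2|LL2] /=.
  by subst L2; rewrite (sum_neighbours_center hT) // /g d0 multB_center_balance.
rewrite add0r (sum_neighbours_off_center hT s_uniq s_size s_adj _ LL2).
by rewrite multB_balance // lt0n (dist_eq0 hT).
Qed.
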